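(* Let $D_i$, $i\in\mathbb{Z}$, be i.i.d. non-negative integer-valued random variables with law $F$ having finite second moment. Fix $\alpha>0$. For $d\in\mathbb{N}$ let $D_i^d=\max\{D_i-d,0\}$ and $\mu_d=\mathbb{E}[D_i^d]$. If $d$ is such that $\mu_d<\alpha/18$, then $\mathbb{E}[|C^{d,\alpha}|]<\infty$.
   Context: A vertex $i\in\mathbb{Z}$ is $\alpha$-claimed on level $d$ iff $\sum_{k=i-m}^{i+m}D_k^d\ge\alpha m$ for some integer $m\ge1$. A cluster of $\alpha$-claimed vertices is a maximal set of consecutive $\alpha$-claimed vertices; $C^{d,\alpha}$ denotes the cluster containing the origin (empty if the origin is not $\alpha$-claimed). *)

From HB Require Import structures.
From mathcomp Require Import all_boot all_order all_algebra.
From mathcomp Require Import all_classical all_reals all_analysis.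
Set Implicit Arguments. Unset Strict Implicit. Unset Printing Implicit Defensive.
Import Order.TTheory GRing.Theory Num.Theory.
Local Open Scope classical_set_scope.
Local Open Scope ring_scope.

Section Defs.
Context {dT : measure_display} {T : measurableType dT} {R : realType}.

Definition nat_rv_family (D : int -> T -> nat) : Prop :=
  forall (i : int) (A : set nat), measurable (D i @^-1` A).

Definition mutually_independent (P : probability T R) (D : int -> T -> nat) : Prop :=
  forall (s : seq int) (A : int -> set nat), uniq s ->
    P (\bigcap_(i in [set` s]) (D i @^-1` A i)) = (\prod_(i <- s) P (D i @^-1` A i))%E.

Definition identically_distributed (P : probability T R) (D : int -> T -> nat) : Prop :=
  forall (i : int) (A : set nat), P (D i @^-1` A) = P (D 0 @^-1` A).

(* D_i^d = max(D_i - d, 0); truncated nat subtraction *)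
Definition Dtrunc (D : int -> T -> nat) (d : nat) (k : int) (x : T) : nat :=
  (D k x - d)%N.

Definition claimed (D : int -> T -> nat) (d : nat) (alpha : R) (x : T) (i : int) : Prop :=
  exists m : nat, (1 <= m)%N /\
    alpha * m%:R <= \sum_(0 <= t < (2 * m).+1) (Dtrunc D d (i - m%:Z + t%:Z) x)%:R.

(* cluster of alpha-claimed vertices containing the origin (empty if 0 not claimed) *)
Definition cluster0 (D : int -> T -> nat) (d : nat) (alpha : R) (x : T) : set int :=
  [set j : int | forall k : int, Num.min 0 j <= k <= Num.max 0 j -> claimed D d alpha x k].

(* |C^{d,alpha}| as an extended real (+oo if infinite) *)
Definition cluster_size (D : int -> T -> nat) (d : nat) (alpha : R) (x : T) : \bar R :=
  \esum_(j in cluster0 D d alpha x) (1%E : \bar R).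

End Defs.

From HB Require Import structures.
From mathcomp Require Import all_boot all_order all_algebra.
From mathcomp Require Import all_classical all_reals all_analysis.
From mathcomp Require Import measurable_realfun.
From mathcomp Require Import ring lra zify.
Set Implicit Arguments. Unset Strict Implicit. Unset Printing Implicit Defensive.
Import Order.TTheory GRing.Theory Num.Theory.
Local Open Scope classical_set_scope.
Local Open Scope ring_scope.

(* If the cluster of the origin is C = [a, b], every vertex of C is claimed, and a
   Vitali-type covering (keep the claim of largest radius, recurse on both sides of
   its window) yields an interval [s, t] containing C with
   alpha (t - s) <= 9 sum_(s <= k < t) D_k^d.  Splitting at the origin and writing
   kappa = alpha / 18 gives |C| <= t - s <= (M_L + M_R) / kappa, where M_R and M_L
   are the maxima of the random walks sum_(j < n) (D_j^d - kappa) to the right and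
   to the left of the origin.  These walks have negative drift mu_d - kappa, and
   Kingman's bound E[M] <= E[(X - kappa)^2] / (2 (kappa - mu_d)), obtained by
   squaring Lindley's recursion M' = max(0, X - kappa + M), bounds their means by
   the second moment.  To make this rigorous the steps are capped at a level N
   (so that all expectations are finite sums over product laws) and the walks are
   stopped after N steps; the bound is uniform in N and monotone convergence
   concludes. *)

Section WalkMaximum.
Variables (R : realFieldType) (kappa : R).

(* The maximum over k <= size w of sum_(j < k) (w_j - kappa), via Lindley's recursion. *)
Fixpoint walk_max (w : seq nat) : R :=
  if w is v :: u then Num.max 0 (v%:R - kappa + walk_max u) else 0.

Lemma walk_max_ge0 w : 0 <= walk_max w.
Proof. by case: w => [|v u] //=; rewrite le_max lexx. Qed.

Lemma walk_max_le w w' : (size w <= size w')%N ->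
  (forall j, (j < size w)%N -> (nth 0 w j <= nth 0 w' j)%N) -> walk_max w <= walk_max w'.
Proof.
elim: w w' => [|v u IH] w'; first by move=> *; exact: walk_max_ge0.
case: w' => [|v' u'] //= le_size le_nth; apply: le_max2 => //; apply: lerD.
  by rewrite lerD2r ler_nat (le_nth 0%N).
by apply: IH => // j; exact: (le_nth j.+1).
Qed.

Lemma partial_sum_le_walk_max w k : (k <= size w)%N ->
  \sum_(0 <= j < k) (nth 0 w j)%:R - kappa * k%:R <= walk_max w.
Proof.
elim: w k => [|v u IH] [|k] le_k; try by rewrite big_geq // mulr0 subr0 walk_max_ge0.
rewrite /= big_nat_recl // le_max; apply/orP; right.
by have := IH k le_k; rewrite -addn1 natrD; lra.
Qed.

End WalkMaximum.

Section ProductLaw.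
Variables (R : realFieldType) (K : nat) (q : nat -> R).

Fixpoint words n : seq (seq nat) :=
  if n is n'.+1 then [seq v :: u | v <- iota 0 K.+1, u <- words n'] else [:: [::]].

(* Expectation under the law of n i.i.d. letters in {0, ..., K} of law q. *)
Definition Eprod n (F : seq nat -> R) := \sum_(w <- words n) F w * \prod_(v <- w) q v.

Lemma wordsS n : words n.+1 = [seq v :: u | v <- iota 0 K.+1, u <- words n].
Proof. by []. Qed.

Lemma words_uniq n : uniq (words n).
Proof.
elim: n => [//|n IH]; rewrite wordsS allpairs_uniq ?iota_uniq //.
by move=> [a b] [c e] _ _ /= [-> ->].
Qed.

Lemma mem_words n w : (w \in words n) = (size w == n) && all (leq^~ K) w.
Proof.
elim: n w => [|n IH] [|v w] //; rewrite wordsS.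
- by rewrite [RHS]/=; apply/negbTE/negP => /allpairsP [[a u] [_ _ //]].
- rewrite [RHS]/= eqSS; apply/allpairsP/idP => [[[a u] [+ + [-> ->]]]|].
    by rewrite mem_iota IH => /= lt_aK /andP [-> ->]; rewrite -ltnS lt_aK.
  move=> /andP [size_w /andP [le_vK all_w]]; exists (v, w).
  by rewrite mem_iota IH size_w all_w ltnS le_vK.
Qed.

Lemma Eprod0 F : Eprod 0 F = F [::].
Proof. by rewrite /Eprod /= big_seq1 big_nil mulr1. Qed.

Lemma EprodS n F :
  Eprod n.+1 F = \sum_(v <- iota 0 K.+1) q v * Eprod n (fun u => F (v :: u)).
Proof.
rewrite /Eprod wordsS big_allpairs_dep; apply: eq_bigr => v _.
by rewrite mulr_sumr; apply: eq_bigr => u _; rewrite big_cons; ring.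
Qed.

Lemma Eprod1 F : Eprod 1 F = \sum_(v <- iota 0 K.+1) q v * F [:: v].
Proof. by rewrite EprodS; apply: eq_bigr => v _; rewrite Eprod0. Qed.

Hypothesis q_ge0 : forall v, 0 <= q v.
Hypothesis q_sum1 : \sum_(v <- iota 0 K.+1) q v = 1.

Lemma ler_Eprod n F G : (forall w, F w <= G w) -> Eprod n F <= Eprod n G.
Proof.
by move=> le_FG; apply: ler_sum => w _; apply: ler_wpM2r (le_FG w); exact: prodr_ge0.
Qed.

Lemma Eprod_cst n c : Eprod n (fun _ => c) = c.
Proof.
elim: n => [|n IH]; first by rewrite Eprod0.
by rewrite EprodS (eq_bigr (fun v => q v * c)) ?IH // -mulr_suml q_sum1 mul1r.
Qed.

Lemma Eprod_affine n a b F G :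
  Eprod n (fun u => a + b * F u + G u) = a + b * Eprod n F + Eprod n G.
Proof.
have mass1 : \sum_(w <- words n) \prod_(v <- w) q v = 1.
  by rewrite -[RHS](Eprod_cst n 1) /Eprod; apply: eq_bigr => w _; rewrite mul1r.
rewrite /Eprod -[in RHS](mulr1 a) -[X in a * X]mass1 !mulr_sumr -!big_split.
by apply: eq_bigr => w _ /=; ring.
Qed.

Lemma Eprod_take n F : Eprod n.+1 (fun w => F (take n w)) = Eprod n F.
Proof.
elim: n F => [|n IH] F.
  rewrite EprodS Eprod0 (eq_bigr (fun v => q v * F [::])) => [|v _]; last by rewrite Eprod0.
  by rewrite -mulr_suml q_sum1 mul1r.
by rewrite EprodS [RHS]EprodS; apply: eq_bigr => v _; rewrite (IH (fun u => F (v :: u))).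
Qed.

Definition qmean := \sum_(v <- iota 0 K.+1) q v * v%:R.
Definition qdev2 (kappa : R) := \sum_(v <- iota 0 K.+1) q v * (v%:R - kappa) ^+ 2.

Section Kingman.
Variable kappa : R.
Hypothesis qmean_lt : qmean < kappa.

Local Notation M := (walk_max kappa).

(* One step of Lindley's recursion, squared: max(0, y)^2 <= y^2. *)
Lemma Eprod_walk_max_sqS n : Eprod n.+1 (fun w => M w ^+ 2) <=
  qdev2 kappa + 2 * (qmean - kappa) * Eprod n M + Eprod n (fun w => M w ^+ 2).
Proof.
set E := Eprod n M; set E2 := Eprod n _.
have -> : qdev2 kappa + 2 * (qmean - kappa) * E + E2 =
    \sum_(v <- iota 0 K.+1) q v * ((v%:R - kappa) ^+ 2 + 2 * (v%:R - kappa) * E + E2).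
  rewrite (eq_bigr (fun v => q v * (v%:R - kappa) ^+ 2 + (2 * E) * (q v * v%:R)
    + (- (2 * E * kappa)) * q v + E2 * q v)) => [|v _]; last by ring.
  by rewrite !big_split /= -!mulr_sumr q_sum1 /qdev2 /qmean; ring.
rewrite EprodS; apply: ler_sum => v _; apply: ler_wpM2l => //.
rewrite -Eprod_affine; apply: ler_Eprod => u /=.
set y := v%:R - kappa + M u.
have -> : (v%:R - kappa) ^+ 2 + 2 * (v%:R - kappa) * M u + M u ^+ 2 = y ^+ 2 by rewrite /y; ring.
by case: (lerP 0 y) => y0; rewrite ?lexx // expr0n sqr_ge0.
Qed.

Lemma Eprod_walk_max_sq_le n :
  Eprod n (fun w => M w ^+ 2) <= Eprod n.+1 (fun w => M w ^+ 2).
Proof.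
rewrite -(Eprod_take n (fun w => M w ^+ 2)); apply: ler_Eprod => w.
have le_M : M (take n w) <= M w.
  apply: walk_max_le => [|j]; first by rewrite size_take; case: ltnP => // /ltnW.
  by rewrite size_take => lt_j; rewrite nth_take // (leq_trans lt_j) // geq_minl.
by apply: ler_pM => //; exact: walk_max_ge0.
Qed.

Lemma kingman_bound n : Eprod n M <= qdev2 kappa / (2 * (kappa - qmean)).
Proof.
have := le_trans (Eprod_walk_max_sq_le n) (Eprod_walk_max_sqS n).
have gap_gt0 : 0 < kappa - qmean by rewrite subr_gt0.
rewrite ler_pdivlMr; last by rewrite mulr_gt0.
nra.
Qed.

End Kingman.
End ProductLaw.

Lemma ex_argmax_lt (g : nat -> nat) n : (0 < n)%N ->
  exists2 j, (j < n)%N & forall i, (i < n)%N -> (g i <= g j)%N.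
Proof.
case: n => // n _; have [j _ max_j] := @arg_maxnP 'I_n.+1 ord0 predT g isT.
by exists j => // i lt_in; exact: (max_j (Ordinal lt_in)).
Qed.

Section WindowSum.
Variables (R : realFieldType) (f : int -> R).

Definition wsum (s e : int) : R := \sum_(0 <= j < absz (e - s)) f (s + j%:Z).

Lemma wsum_id s : wsum s s = 0.
Proof. by rewrite /wsum subrr big_geq. Qed.

Lemma wsum_cat s u e : s <= u -> u <= e -> wsum s e = wsum s u + wsum u e.
Proof.
move=> le_su le_ue; rewrite /wsum (big_cat_nat _ (n := absz (u - s))) /=; last 2 first.
- exact: leq0n.
- by lia.
congr (_ + _); rewrite -{1}[absz (u - s)]add0n big_addn.
have -> : (absz (e - s) - absz (u - s))%N = absz (e - u) by lia.
by apply: eq_bigr => i _; congr f; lia.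
Qed.

Hypothesis f_ge0 : forall k, 0 <= f k.

Lemma wsum_ge0 s e : 0 <= wsum s e.
Proof. exact: sumr_ge0. Qed.

Variables (alpha : R) (r : int -> nat).
Hypothesis alpha_ge0 : 0 <= alpha.

Definition claims p := (0 < r p)%N /\ alpha * (r p)%:R <= wsum (p - (r p)%:Z) (p + (r p)%:Z + 1).

(* The two covers and the claimed window of radius m are disjoint; the window and
   the two gaps have total length at most 4m + 1 <= 5m, which the claim pays for. *)
Lemma vitali_merge s1 t1 k m s2 t2 : (0 < m)%N -> s1 <= t1 ->
  k - 2 * m%:Z <= t1 <= k - m%:Z -> k + m%:Z + 1 <= s2 <= k + 2 * m%:Z + 1 -> s2 <= t2 ->
  alpha * (t1 - s1)%:~R <= 9 * wsum s1 t1 ->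
  alpha * m%:R <= wsum (k - m%:Z) (k + m%:Z + 1) ->
  alpha * (t2 - s2)%:~R <= 9 * wsum s2 t2 ->
  alpha * (t2 - s1)%:~R <= 9 * wsum s1 t2.
Proof.
move=> m_gt0 le_st1 /andP [t1_lo t1_hi] /andP [s2_lo s2_hi] le_st2 cover1 claim_k cover2.
have -> : wsum s1 t2 = wsum s1 t1 + wsum t1 (k - m%:Z) + wsum (k - m%:Z) (k + m%:Z + 1)
    + wsum (k + m%:Z + 1) s2 + wsum s2 t2.
  rewrite (@wsum_cat s1 t1 t2) ?(@wsum_cat t1 (k - m%:Z) t2)
    ?(@wsum_cat (k - m%:Z) (k + m%:Z + 1) t2) ?(@wsum_cat (k + m%:Z + 1) s2 t2) ?addrA //; lia.
have gap1 := wsum_ge0 t1 (k - m%:Z); have gap2 := wsum_ge0 (k + m%:Z + 1) s2.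
have len : (t2 - s1)%:~R <= (t1 - s1)%:~R + (t2 - s2)%:~R + 5 * m%:R :> R.
  have : t2 - s1 <= (t1 - s1) + (t2 - s2) + 5 * m%:Z by lia.
  by rewrite -(ler_int R) !intrD intrM.
have claim_ge0 : 0 <= alpha * m%:R by rewrite mulr_ge0.
have := ler_wpM2l alpha_ge0 len; rewrite !mulrDr (mulrCA alpha 5).
lra.
Qed.

Lemma vitali_cover n a e (b : nat) : a < e -> (absz (e - a) <= n)%N ->
  (forall p, a <= p < e -> claims p /\ (r p <= b)%N) ->
  exists s t, [/\ s <= a, e <= t, a - b%:Z <= s, t <= e + b%:Z
                & alpha * (t - s)%:~R <= 9 * wsum s t].
Proof.
elim: n a e b => [|n IH] a e b lt_ae le_n hr; first by lia.
have [j lt_j max_j] := ex_argmax_lt (fun j => r (a + j%:Z)) (n := absz (e - a)) ltac:(lia).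
set k := a + j%:Z; set m := r k.
have [[m_gt0 claim_k] le_mb] := hr k ltac:(lia).
have max_k p : a <= p < e -> (r p <= m)%N.
  by move=> ?; have := max_j (absz (p - a)) ltac:(lia); rewrite (_ : a + _ = p) //; lia.
have [s1 [t1 [s1_a s1_lo le_st1 t1_mid cover1]]] : exists s1 t1,
    [/\ s1 <= a, a - b%:Z <= s1, s1 <= t1, k - 2 * m%:Z <= t1 <= k - m%:Z
      & alpha * (t1 - s1)%:~R <= 9 * wsum s1 t1].
  have [lt_left|ge_left] := ltP a (k - 2 * m%:Z).
    have [s [t [? ? ? ? ?]]] := IH a (k - 2 * m%:Z) m lt_left ltac:(lia)
      (fun p hp => conj (hr p ltac:(lia)).1 (max_k p ltac:(lia))).
    by exists s, t; split => //; lia.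
  exists (Num.min a (k - m%:Z)), (Num.min a (k - m%:Z)).
  by rewrite subrr mulr0 wsum_id mulr0; split => //; lia.
have [s2 [t2 [s2_mid le_st2 t2_e t2_hi cover2]]] : exists s2 t2,
    [/\ k + m%:Z + 1 <= s2 <= k + 2 * m%:Z + 1, s2 <= t2, e <= t2, t2 <= e + b%:Z
      & alpha * (t2 - s2)%:~R <= 9 * wsum s2 t2].
  have [lt_right|ge_right] := ltP (k + 2 * m%:Z + 1) e.
    have [s [t [? ? ? ? ?]]] := IH (k + 2 * m%:Z + 1) e m lt_right ltac:(lia)
      (fun p hp => conj (hr p ltac:(lia)).1 (max_k p ltac:(lia))).
    by exists s, t; split => //; lia.
  exists (Num.max e (k + m%:Z + 1)), (Num.max e (k + m%:Z + 1)).
  by rewrite subrr mulr0 wsum_id mulr0; split => //; lia.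
exists s1, t2; split => //.
exact: (vitali_merge m_gt0 le_st1 t1_mid s2_mid le_st2 cover1 claim_k cover2).
Qed.

End WindowSum.

Lemma map_nth_index (S : eqType) (U : Type) (x0 : U) (ix : seq S) (w : seq U) :
  uniq ix -> size w = size ix -> map (fun j => nth x0 w (index j ix)) ix = w.
Proof.
case: ix => [|j0 ix] uniq_ix size_w; first by case: w size_w.
apply: (@eq_from_nth _ x0) => [|i]; rewrite size_map // => lt_i.
by rewrite (nth_map j0) // index_uniq.
Qed.

Section CappedLaw.
Context {dT : measure_display} {T : measurableType dT} {R : realType}.
Variables (P : probability T R) (D : int -> T -> nat) (d K : nat).
Hypothesis D_rv : nat_rv_family D.
Hypothesis D_indep : mutually_independent P D.
Hypothesis D_ident : identically_distributed P D.

Definition Dcap i x := minn (Dtrunc D d i x) K.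
Definition cap_level v := [set u : nat | minn (u - d) K = v].
Definition cap_law v : R := fine (P (D 0 @^-1` cap_level v)).
Definition cap_event (ix : seq int) (w : seq nat) := [set x | map (Dcap ^~ x) ix = w].

Lemma measurable_comp_D i (h : nat -> \bar R) : measurable_fun setT (fun x => h (D i x)).
Proof. by move=> _ B _; rewrite setTI; exact: (D_rv i (h @^-1` B)). Qed.

Lemma cap_law_ge0 v : 0 <= cap_law v.
Proof. exact: fine_ge0. Qed.

Lemma cap_event_cons i ix v w :
  cap_event (i :: ix) (v :: w) = D i @^-1` cap_level v `&` cap_event ix w.
Proof. by apply/seteqP; split => x [<- <-]. Qed.

Lemma measurable_cap_event ix w : measurable (cap_event ix w).
Proof.
elim: ix w => [|i ix IH] [|v w].
- by rewrite (_ : cap_event _ _ = setT) //; apply/seteqP; split.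
- by rewrite (_ : cap_event _ _ = set0) //; apply/seteqP; split.
- by rewrite (_ : cap_event _ _ = set0) //; apply/seteqP; split.
- by rewrite cap_event_cons; apply: measurableI => //; exact: D_rv.
Qed.

Lemma cap_eventE ix w : uniq ix -> size w = size ix ->
  cap_event ix w = \bigcap_(j in [set` ix]) D j @^-1` cap_level (nth 0%N w (index j ix)).
Proof.
move=> uniq_ix size_w; apply/seteqP; split => x /=.
  by move=> <- j /= j_ix; rewrite (nth_map 0) ?index_mem // nth_index.
move=> capx; rewrite -(map_nth_index 0%N uniq_ix size_w).
by apply/eq_in_map => j j_ix; exact: capx.
Qed.

Lemma prob_cap_event ix w : uniq ix -> size w = size ix ->
  P (cap_event ix w) = (\prod_(v <- w) cap_law v)%:E.
Proof.
move=> uniq_ix size_w; rewrite cap_eventE // D_indep // -prodEFin.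
rewrite -[in RHS](map_nth_index 0%N uniq_ix size_w) big_map.
apply: eq_bigr => j _; rewrite D_ident /cap_law fineK // fin_num_measure //; exact: D_rv.
Qed.

Lemma cap_fun_sum ix (G : seq nat -> R) x :
  G (map (Dcap ^~ x) ix) = \sum_(w <- words K (size ix)) G w * \1_(cap_event ix w) x.
Proof.
have capx_words : map (Dcap ^~ x) ix \in words K (size ix).
  by rewrite mem_words size_map eqxx all_map; apply/allP => i _; exact: geq_minr.
rewrite (bigD1_seq _ capx_words (words_uniq _ _)) /= indicE mem_set // mulr1.
rewrite big1 ?addr0 // => w ne_w; rewrite indicE memNset ?mulr0 //= => capx.
by move: ne_w; rewrite capx eqxx.
Qed.

Lemma measurable_cap_fun ix (G : seq nat -> R) :
  measurable_fun setT (fun x => G (map (Dcap ^~ x) ix)).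
Proof.
rewrite (funext (cap_fun_sum ix G)); apply: measurable_sum => w.
by apply: measurable_funM => //; apply: measurable_indic; exact: measurable_cap_event.
Qed.

Lemma integral_cap_fun ix (G : seq nat -> R) : uniq ix -> (forall w, 0 <= G w) ->
  (\int[P]_x (G (map (Dcap ^~ x) ix))%:E = (Eprod K cap_law (size ix) G)%:E)%E.
Proof.
move=> uniq_ix G_ge0; have ind_ge0 (A : set T) x : (0 <= (\1_A x : R)%:E)%E.
  by rewrite lee_fin indicE ler0n.
have mind w : measurable_fun setT (fun x => (\1_(cap_event ix w) x : R)%:E).
  by apply/measurable_EFinP/measurable_indic; exact: measurable_cap_event.
under eq_integral do rewrite cap_fun_sum -sumEFin.
under eq_integral do under eq_bigr do rewrite EFinM.
rewrite ge0_integral_sum //; last first.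
- by move=> w x _; rewrite mule_ge0 // lee_fin.
- by move=> w; exact: emeasurable_funM.
rewrite /Eprod -sumEFin big_seq [RHS]big_seq; apply: eq_bigr => w.
rewrite mem_words => /andP [/eqP size_w _].
have mE := measurable_cap_event ix w.
rewrite ge0_integralZl_EFin // integral_indic // setIT EFinM.
by congr (_ * _)%E; exact: prob_cap_event.
Qed.

Lemma cap_law_sum1 : \sum_(v <- iota 0 K.+1) cap_law v = 1.
Proof.
have int1 : (\int[P]_x (cst 1%:E) x = 1)%E.
  by rewrite (integral_cst P measurableT) mul1e; exact: probability_setT.
have := integral_cap_fun (G := fun=> 1) (ix := [:: 0]) isT (fun=> ler01).
rewrite Eprod1 int1 => -[->].
by apply: eq_bigr => v _; rewrite mulr1.
Qed.

Lemma qmean_cap_law_le :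
  ((qmean K cap_law)%:E <= \int[P]_x ((Dtrunc D d 0 x)%:R)%:E)%E.
Proof.
have := integral_cap_fun (G := fun w => (head 0%N w)%:R) (ix := [:: 0]) isT (fun=> ler0n _ _).
rewrite Eprod1 /= => <-; apply: ge0_le_integral => //.
- exact: (measurable_comp_D 0 (fun n => ((minn (n - d) K)%:R)%:E)).
- exact: (measurable_comp_D 0 (fun n => ((n - d)%N%:R)%:E)).
- by move=> x _; rewrite lee_fin ler_nat geq_minl.
Qed.

Lemma second_moment_cap_law_le :
  ((\sum_(v <- iota 0 K.+1) cap_law v * v%:R ^+ 2)%:E <= \int[P]_x (((D 0 x) ^ 2)%N%:R)%:E)%E.
Proof.
have := integral_cap_fun (G := fun w => (head 0%N w)%:R ^+ 2) (ix := [:: 0]) isT (fun=> sqr_ge0 _).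
rewrite Eprod1 /= => <-; apply: ge0_le_integral => //.
- exact: (measurable_comp_D 0 (fun n => ((minn (n - d) K)%:R ^+ 2)%:E)).
- exact: (measurable_comp_D 0 (fun n => ((n ^ 2)%N%:R)%:E)).
- move=> x _; rewrite lee_fin natrX ler_pXn2r ?nnegrE // ler_nat.
  exact: leq_trans (geq_minl _ _) (leq_subr _ _).
Qed.

End CappedLaw.

Definition rightward (j : nat) : int := j%:Z.
Definition leftward (j : nat) : int := - j%:Z - 1.

Lemma rightward_inj : injective rightward.
Proof. by move=> i j; rewrite /rightward; lia. Qed.

Lemma leftward_inj : injective leftward.
Proof. by move=> i j; rewrite /leftward; lia. Qed.

Section CappedWalk.
Context {dT : measure_display} {T : measurableType dT} {R : realType}.
Variables (D : int -> T -> nat) (alpha : R) (d : nat).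

(* The same N serves as the cap level and as the number of steps. *)
Definition capped_walk N (f : nat -> int) x :=
  walk_max (alpha / 18) (map (Dcap D d N ^~ x) (mkseq f N)).

Lemma nth_capped_seq K N f x j : (j < N)%N ->
  nth 0%N (map (Dcap D d K ^~ x) (mkseq f N)) j = Dcap D d K (f j) x.
Proof. by move=> lt_j; rewrite (nth_map (f 0%N)) ?size_mkseq // nth_mkseq. Qed.

Lemma capped_walk_ge0 N f x : 0 <= capped_walk N f x.
Proof. exact: walk_max_ge0. Qed.

Lemma capped_walk_le N N' f x : (N <= N')%N -> capped_walk N f x <= capped_walk N' f x.
Proof.
move=> le_N; apply: walk_max_le => [|j]; rewrite !size_map !size_iota //.
move=> lt_j; rewrite !nth_capped_seq ?(leq_trans lt_j le_N) // /Dcap; lia.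
Qed.

Lemma partial_sum_le_capped_walk N f x t : (t <= N)%N ->
  (forall j, (j < t)%N -> (Dtrunc D d (f j) x <= N)%N) ->
  \sum_(0 <= j < t) (Dtrunc D d (f j) x)%:R - alpha / 18 * t%:R <= capped_walk N f x.
Proof.
move=> le_tN small.
rewrite (@eq_big_nat _ _ _ _ _ _ (fun j => (nth 0%N (map (Dcap D d N ^~ x) (mkseq f N)) j)%:R)).
  by apply: partial_sum_le_walk_max; rewrite size_map size_mkseq.
move=> j /andP [_ lt_j]; rewrite nth_capped_seq ?(leq_trans lt_j le_tN) //.
by congr _%:R; apply/esym/minn_idPl/small.
Qed.

Variable P : probability T R.
Hypothesis D_rv : nat_rv_family D.
Hypothesis D_indep : mutually_independent P D.
Hypothesis D_ident : identically_distributed P D.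
Hypothesis alpha_gt0 : 0 < alpha.
Hypothesis D_sq_int : (\int[P]_x (((D 0 x) ^ 2)%N%:R)%:E < +oo)%E.
Hypothesis mean_lt : (\int[P]_x ((Dtrunc D d 0 x)%:R)%:E < (alpha / 18)%:E)%E.

Let kappa := alpha / 18.
Let mu := fine (\int[P]_x ((Dtrunc D d 0 x)%:R)%:E).
Let V := fine (\int[P]_x (((D 0 x) ^ 2)%N%:R)%:E).

Lemma mean_trunc_fin_num : (\int[P]_x ((Dtrunc D d 0 x)%:R)%:E)%E \is a fin_num.
Proof.
rewrite ge0_fin_numE; first exact: lt_trans mean_lt (ltry _).
by apply: integral_ge0 => x _; rewrite lee_fin.
Qed.

Lemma mu_lt_kappa : mu < kappa.
Proof. by rewrite -lte_fin fineK ?mean_trunc_fin_num. Qed.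

Lemma qmean_cap_law_le_mu K : qmean K (cap_law P D d K) <= mu.
Proof.
rewrite -lee_fin fineK ?mean_trunc_fin_num //.
exact: (qmean_cap_law_le d K D_rv D_indep D_ident).
Qed.

Lemma qdev2_cap_law_le K : qdev2 K (cap_law P D d K) kappa <= V + kappa ^+ 2.
Proof.
have kappa_ge0 : 0 <= kappa by rewrite divr_ge0 ?ltW.
have second_le : \sum_(v <- iota 0 K.+1) cap_law P D d K v * v%:R ^+ 2 <= V.
  rewrite -lee_fin fineK; first exact: (second_moment_cap_law_le d K D_rv D_indep D_ident).
  by rewrite ge0_fin_numE // integral_ge0 // => x _; rewrite lee_fin.
apply: le_trans (lerD second_le (lexx (kappa ^+ 2))).
have -> : kappa ^+ 2 = \sum_(v <- iota 0 K.+1) cap_law P D d K v * kappa ^+ 2.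
  by rewrite -mulr_suml (cap_law_sum1 d K D_rv D_indep D_ident) mul1r.
rewrite -big_split /=.
apply: ler_sum => v _; rewrite -mulrDr ler_wpM2l ?cap_law_ge0 //.
have vk_ge0 : 0 <= v%:R * kappa by rewrite mulr_ge0.
nra.
Qed.

Lemma integral_capped_walk_le N f : injective f ->
  (\int[P]_x (capped_walk N f x)%:E <= ((V + kappa ^+ 2) / (2 * (kappa - mu)))%:E)%E.
Proof.
move=> f_inj; rewrite /capped_walk (integral_cap_fun d N D_rv D_indep D_ident
  (mkseq_uniq N f_inj) (walk_max_ge0 (alpha / 18))) lee_fin size_mkseq.
have qmean_lt := le_lt_trans (qmean_cap_law_le_mu N) mu_lt_kappa.
apply: le_trans (kingman_bound (cap_law_ge0 P D d N)
  (cap_law_sum1 d N D_rv D_indep D_ident) qmean_lt _) _.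
have gap_gt0 : 0 < 2 * (kappa - mu) by rewrite mulr_gt0 // subr_gt0 mu_lt_kappa.
have le_gap : 2 * (kappa - mu) <= 2 * (kappa - qmean N (cap_law P D d N)).
  by rewrite ler_pM2l // lerB // qmean_cap_law_le_mu.
have qdev2_ge0 : 0 <= qdev2 N (cap_law P D d N) kappa.
  by apply: sumr_ge0 => v _; rewrite mulr_ge0 ?cap_law_ge0 ?sqr_ge0.
apply: ler_pM qdev2_ge0 _ (qdev2_cap_law_le N) _.
- by rewrite invr_ge0 ltW // (lt_le_trans gap_gt0 le_gap).
- by rewrite lef_pV2 ?posrE // (lt_le_trans gap_gt0 le_gap).
Qed.

End CappedWalk.

Lemma uniq_size_le_interval (s : seq int) a b : uniq s ->
  (forall j, j \in s -> a <= j <= b) -> a <= b -> (size s <= absz (b - a) + 1)%N.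
Proof.
move=> uniq_s s_ab le_ab; rewrite -(size_map (fun j => absz (j - a))).
rewrite -[(absz (b - a) + 1)%N](size_iota 0); apply: uniq_leq_size.
  rewrite map_inj_in_uniq // => j k /s_ab + /s_ab; lia.
by move=> i /mapP [j /s_ab j_ab ->]; rewrite mem_iota; lia.
Qed.

Lemma segments_through0 (Q : int -> Prop) (s : seq int) : Q 0 ->
  (forall j, j \in s -> forall k, Num.min 0 j <= k <= Num.max 0 j -> Q k) ->
  forall k, \big[Num.min/0]_(j <- s) j <= k <= \big[Num.max/0]_(j <- s) j -> Q k.
Proof.
move=> Q0 seg k /andP [lo_k k_hi]; have [k_le0|k_gt0] := lerP k 0.
  move: lo_k k_le0; rewrite big_seq; elim/big_ind: _ => [? ?|y z IHy IHz|j js jk k0].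
  - by have -> : k = 0 by lia.
  - by rewrite ge_min => /orP [/IHy|/IHz]; apply.
  - by apply: (seg j js); lia.
move: k_hi (ltW k_gt0); rewrite big_seq; elim/big_ind: _ => [? ?|y z IHy IHz|j js kj k0].
- by have -> : k = 0 by lia.
- by rewrite le_max => /orP [/IHy|/IHz]; apply.
- by apply: (seg j js); lia.
Qed.

Section ClusterGeometry.
Context {dT : measure_display} {T : measurableType dT} {R : realType}.
Variables (D : int -> T -> nat) (d : nat) (alpha : R) (x : T).
Hypothesis alpha_gt0 : 0 < alpha.

Local Notation claimed := (claimed D d alpha x).
Local Notation f := (fun k => (Dtrunc D d k x)%:R : R).

Lemma claimed_wsum p : claimed p ->
  exists m : nat, (0 < m)%N /\ alpha * m%:R <= wsum f (p - m%:Z) (p + m%:Z + 1).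
Proof.
move=> [m [m_gt0 claim]]; exists m; split => //; rewrite /wsum.
by have -> : absz (p + m%:Z + 1 - (p - m%:Z))%R = (2 * m).+1 by lia.
Qed.

Lemma claimed_cover a e : a < e -> (forall p, a <= p < e -> claimed p) ->
  exists s t, [/\ s <= a, e <= t & alpha * (t - s)%:~R <= 9 * wsum f s t].
Proof.
move=> lt_ae claimed_ae.
have [r r_claims] : exists r : int -> nat, forall p, claimed p -> claims f alpha r p.
  exists (fun p => if pselect (claimed p) is left cp then projT1 (cid (claimed_wsum cp)) else 0%N).
  move=> p cp; rewrite /claims /=; case: (pselect (claimed p)) => // cp'.
  exact: (projT2 (cid (claimed_wsum cp'))).
have [j lt_j max_j] := ex_argmax_lt (fun j => r (a + j%:Z)) (n := absz (e - a)) ltac:(lia).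
have r_le p : a <= p < e -> (r p <= r (a + j%:Z)%R)%N.
  by move=> ?; have := max_j (absz (p - a)) ltac:(lia); rewrite (_ : a + _ = p) //; lia.
have [s [t [? ? _ _ ?]]] := @vitali_cover R f (fun k => ler0n R _) alpha r (ltW alpha_gt0)
  _ a e _ lt_ae (leqnn _) (fun p ap => conj (r_claims p (claimed_ae p ap)) (r_le p ap)).
by exists s, t.
Qed.

Lemma window_le_walks s t : s <= 0 <= t -> alpha * (t - s)%:~R <= 9 * wsum f s t ->
  exists N, alpha * (t - s)%:~R <=
    18 * (capped_walk D alpha d N leftward x + capped_walk D alpha d N rightward x).
Proof.
move=> /andP [s_le0 t_ge0] cover.
pose N := (absz s + absz t + \max_(j <- index_iota 0 (absz (t - s))) Dtrunc D d (s + j%:Z) x)%N.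
have small k : s <= k < t -> (Dtrunc D d k x <= N)%N.
  move=> sk; rewrite /N (_ : k = s + (absz (k - s))%:Z); last by lia.
  apply: leq_trans (leq_addl (absz s + absz t) _); apply: leq_bigmax_seq => //.
  by rewrite mem_index_iota; lia.
have right : wsum f 0 t - alpha / 18 * (absz t)%:R <= capped_walk D alpha d N rightward x.
  rewrite /wsum subr0 (eq_bigr (fun j => (Dtrunc D d (rightward j) x)%:R)) => [|j _].
    by apply: partial_sum_le_capped_walk => [|j lt_j]; [lia|apply: small; rewrite /rightward; lia].
  by rewrite add0r.
have left : wsum f s 0 - alpha / 18 * (absz s)%:R <= capped_walk D alpha d N leftward x.
  rewrite /wsum sub0r abszN big_nat_rev /=.
  rewrite (eq_big_nat _ _ (F2 := fun j => (Dtrunc D d (leftward j) x)%:R)) => [|j /andP [_ lt_j]].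
    by apply: partial_sum_le_capped_walk => [|j lt_j]; [lia|apply: small; rewrite /leftward; lia].
  by rewrite /leftward; congr (Dtrunc _ _ _ _)%:R; lia.
have len : (absz s)%:R + (absz t)%:R = (t - s)%:~R :> R.
  rewrite -natrD (_ : (absz s + absz t)%N = absz (t - s)); last by lia.
  by rewrite natr_absz ger0_norm // subr_ge0 (le_trans s_le0).
exists N; rewrite (wsum_cat f s_le0 t_ge0) in cover.
have : alpha / 18 * (absz s)%:R + alpha / 18 * (absz t)%:R = alpha * (t - s)%:~R / 18.
  by rewrite -mulrDr len mulrAC.
lra.
Qed.

Lemma cluster_seq_le (s : seq int) : uniq s -> (forall j, j \in s -> cluster0 D d alpha x j) ->
  exists N, (size s)%:R <=
    18 / alpha * (capped_walk D alpha d N leftward x + capped_walk D alpha d N rightward x).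
Proof.
case: s => [|j0 s'] uniq_s s_cluster.
  by exists 0%N; rewrite mulr_ge0 ?addr_ge0 ?capped_walk_ge0 ?divr_ge0 ?ltW.
set s := j0 :: s' in uniq_s s_cluster *.
set a := \big[Num.min/0]_(j <- s) j; set b := \big[Num.max/0]_(j <- s) j.
have a_le0 : a <= 0 := bigmin_le_id _ _ _ _.
have b_ge0 : 0 <= b := bigmax_ge_id _ _ _ _.
have claimed0 : claimed 0 by apply: (s_cluster j0 (mem_head _ _)); lia.
have claimed_ab p : a <= p < b + 1 -> claimed p.
  by move=> ?; apply: (segments_through0 claimed0 s_cluster); lia.
have size_s : (size s <= absz (b - a) + 1)%N.
  apply: uniq_size_le_interval => // [j js|]; last by lia.
  by rewrite ge_bigmin_seq ?le_bigmax_seq.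
have [s0 [t0 [s0_a t0_b cover]]] := claimed_cover (ltr_pwDr ltr01 (le_trans a_le0 b_ge0)) claimed_ab.
have [|N walks] := window_le_walks (s := s0) (t := t0) _ cover; first by lia.
have size_le : (size s)%:R <= (t0 - s0)%:~R :> R.
  have st_ge0 : 0 <= t0 - s0 by lia.
  have : (size s <= absz (t0 - s0))%N by lia.
  by rewrite -(ler_nat R) natr_absz ger0_norm.
exists N; rewrite mulrAC ler_pdivlMr // mulrC; apply: le_trans walks.
by rewrite ler_pM2l.
Qed.

End ClusterGeometry.

Lemma ge0_le_integral_nonmeasurable d (T : measurableType d) (R : realType)
    (mu : {measure set T -> \bar R}) (f g : T -> \bar R) :
  (forall x, 0 <= f x)%E -> (forall x, f x <= g x)%E -> (\int[mu]_x f x <= \int[mu]_x g x)%E.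
Proof.
move=> f_ge0 le_fg; have g_ge0 x : (0 <= g x)%E by exact: le_trans (le_fg x).
rewrite !ge0_integralE //; apply: le_ereal_sup => _ [h /= le_hf <-].
by exists h => //= x; apply: le_trans (le_hf x) _; rewrite /patch /=; case: ifP.
Qed.

Section Integrability.
Context {dT : measure_display} {T : measurableType dT} {R : realType}.
Variables (P : probability T R) (D : int -> T -> nat) (alpha : R) (d : nat).
Hypothesis D_rv : nat_rv_family D.
Hypothesis D_indep : mutually_independent P D.
Hypothesis D_ident : identically_distributed P D.
Hypothesis alpha_gt0 : 0 < alpha.
Hypothesis D_sq_int : (\int[P]_x (((D 0 x) ^ 2)%N%:R)%:E < +oo)%E.
Hypothesis mean_lt : (\int[P]_x ((Dtrunc D d 0 x)%:R)%:E < (alpha / 18)%:E)%E.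

Definition walk_majorant N x : \bar R :=
  (18 / alpha * (capped_walk D alpha d N leftward x + capped_walk D alpha d N rightward x))%:E.

Lemma walk_majorant_ge0 N x : (0 <= walk_majorant N x)%E.
Proof. by rewrite lee_fin mulr_ge0 ?addr_ge0 ?capped_walk_ge0 ?divr_ge0 ?ltW. Qed.

Lemma walk_majorant_nd x : nondecreasing_seq (walk_majorant ^~ x).
Proof.
move=> N N' le_N; rewrite lee_fin; apply: ler_wpM2l; first by rewrite divr_ge0 // ltW.
by apply: lerD; exact: capped_walk_le.
Qed.

Lemma measurable_walk_majorant N : measurable_fun setT (walk_majorant N).
Proof.
apply/measurable_EFinP; apply: measurable_funM => //.
by apply: measurable_funD; exact: measurable_cap_fun.
Qed.

Lemma integral_walk_majorant_bounded : exists C : R, forall N,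
  (\int[P]_x walk_majorant N x <= C%:E)%E.
Proof.
have [B walk_le] : exists B : R, forall N f, injective f ->
    (\int[P]_x (capped_walk D alpha d N f x)%:E <= B%:E)%E.
  by eexists; exact: integral_capped_walk_le D_rv D_indep D_ident alpha_gt0 D_sq_int mean_lt.
exists (18 / alpha * (B + B)) => N; rewrite /walk_majorant.
under eq_integral do rewrite EFinM EFinD.
have coef_ge0 : 0 <= 18 / alpha by rewrite divr_ge0 // ltW.
rewrite ge0_integralZl_EFin //; last 2 first.
- by move=> x _; rewrite adde_ge0 // lee_fin capped_walk_ge0.
- by apply: emeasurable_funD; apply/measurable_EFinP; exact: measurable_cap_fun.
rewrite ge0_integralD //; last 4 first.
- by move=> x _; rewrite lee_fin capped_walk_ge0.
- by apply/measurable_EFinP; exact: measurable_cap_fun.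
- by move=> x _; rewrite lee_fin capped_walk_ge0.
- by apply/measurable_EFinP; exact: measurable_cap_fun.
rewrite (EFinM (18 / alpha) (B + B)); apply: lee_wpmul2l; first by rewrite lee_fin.
by rewrite EFinD; apply: leeD; apply: walk_le; [exact: leftward_inj|exact: rightward_inj].
Qed.

Lemma cluster_finite_le x (A : set int) : finite_set A -> A `<=` cluster0 D d alpha x ->
  exists N, (\sum_(j \in A) (1 : \bar R) <= walk_majorant N x)%E.
Proof.
move=> finA subA; rewrite fsbig_finite //.
set s := finmap.enum_fset (fset_set A).
have s_cluster j : j \in s -> cluster0 D d alpha x j.
  by move=> js; apply: subA; rewrite -in_setE -in_fset_set.
have [N size_le] := cluster_seq_le alpha_gt0 (finmap.fset_uniq _) s_cluster.
exists N; rewrite sumEFin lee_fin.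
by rewrite (_ : \sum_(j <- s) 1 = (size s)%:R) // -sum1_size natr_sum.
Qed.

Lemma cluster_size_le_lim x : (cluster_size D d alpha x <= limn (walk_majorant ^~ x))%E.
Proof.
rewrite (cvg_lim _ (ereal_nondecreasing_cvgn (walk_majorant_nd x))) //.
apply: ge_ereal_sup => _ [A [finA subA] <-].
have [N le_N] := cluster_finite_le finA subA.
by apply: le_trans le_N _; apply: ereal_sup_ubound; exists N.
Qed.

Lemma integral_cluster_size_lt_oo : (\int[P]_x cluster_size D d alpha x < +oo)%E.
Proof.
have [C int_le] := integral_walk_majorant_bounded.
have size_ge0 x : (0 <= cluster_size D d alpha x)%E by apply: esum_ge0.
apply: le_lt_trans (ltry C).
apply: le_trans (ge0_le_integral_nonmeasurable P size_ge0 cluster_size_le_lim) _.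
rewrite (monotone_convergence P measurableT (fun N => measurable_walk_majorant N)
  (fun N x _ => walk_majorant_ge0 N x) (fun x _ => walk_majorant_nd x)).
apply: lime_le; last exact: nearW.
apply: ereal_nondecreasing_is_cvgn => N N' le_N; apply: ge0_le_integral => //.
- by move=> x _; exact: walk_majorant_ge0.
- exact: measurable_walk_majorant.
- exact: measurable_walk_majorant.
- by move=> x _; exact: walk_majorant_nd.
Qed.

End Integrability.

Theorem proposition4p3 (dT : measure_display) (T : measurableType dT) (R : realType)
  (P : probability T R) (D : int -> T -> nat) (alpha : R) (d : nat) :
  nat_rv_family D ->
  mutually_independent P D ->
  identically_distributed P D ->
  (\int[P]_x (((D 0 x) ^ 2)%N%:R)%:E < +oo)%E ->
  0 < alpha ->
  (\int[P]_x ((Dtrunc D d 0 x)%:R)%:E < (alpha / 18)%:E)%E ->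
  (\int[P]_x cluster_size D d alpha x < +oo)%E.
Proof.
move=> D_rv D_indep D_ident D_sq_int alpha_gt0 mean_lt.
exact: integral_cluster_size_lt_oo D_rv D_indep D_ident alpha_gt0 D_sq_int mean_lt.
Qed.
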